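(* Assume $a^2\rho(\mathbf P_1\mathbf E)<1$ and $B\ge B_0:=\dfrac{\bar M\log(a^2)}{\log(c^2/\bar a^2)}$. Define $\mathcal Z_\theta(b):=b^\theta\,\mathbf d^T(\mathbf I-b\mathbf P_1\mathbf E)^{-1}$ (a row vector) and $$\mathbf Q(\theta):=\big[\mathcal Z_\theta(\bar a^2)-\mathcal Z_\theta(c^2)\big]\frac{B}{c^{2\theta}}+\bar M\big[\mathcal Z_\theta(a^2)-\mathcal Z_\theta(1)\big]\in\mathbb R^{1\times n}.$$ If $\mathbf Q(D)<\mathbf 0$ elementwise for some $D\in\mathbb N$, then $\mathcal J_{S_j}^\theta<0$ for every $\theta\in\{1,\dots,D\}$, every reception index $j$, every $x_{S_j}\in\mathbb R$ and every $\gamma_{S_j}\in\{1,\dots,n\}$.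
   Context: Setup. Fix reals $a,L$ with $|a|>1$ and $\bar a:=a+L$ satisfying $0<\bar a^2<1$; fix $c$ with $\bar a^2<c^2<1$, $M>0$, $B>0$, and $\bar M:=M/(a^2-1)$. Plant $x_{k+1}=ax_k+u_k+v_k$, $v_k$ i.i.d., mean $0$, variance $M$, independent of everything else. Sensor decisions $t_k\in\{0,1\}$, receptions $r_k\in\{0,1\}$ ($r_k=0$ if $t_k=0$). Controller $u_k=L\hat x_k^+$, $\hat x_k:=\bar a\hat x_{k-1}^+$, $\hat x_k^+:=x_k$ if $r_k=1$, else $\hat x_k$. Channel state $\gamma_k\in\{1,\dots,n\}$ with $\Pr[\gamma_{k+1}=i\mid\gamma_k=j,t_k=\ell]=(\mathbf P_\ell)_{ij}$, $\mathbf P_0,\mathbf P_1$ column-stochastic; drop probabilities $\mathbf e\in[0,1]^n$ (if $t_k=1$, $r_k=1$ w.p. $1-e_{\gamma_k}$); $\mathbf E:=\mathrm{diag}(\mathbf e)$, $\mathbf d:=\mathbf 1-\mathbf e$, $\mathbf P^0:=\mathbf I$, $\boldsymbol\delta_i$ standard basis vectors, $\rho$ spectral radius. $r_0=1$; $R_k:=\max\{i<k:r_i=1\}$; $S_0:=0$, $S_{j+1}:=\min\{k>S_j:r_k=1\}$. $I_k^+$ is the sensor's post-transmission information at time $k$, which at a reception time $S_j$ contains $x_{S_j}$, $z^+_{S_j}=0$, $S_j$ and $\gamma_{S_j}$. Performance function $h_k:=x_k^2-\max\{c^{2(k-R_k)}x_{R_k}^2,B\}$. Nominal policy $\mathcal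 T_k^D$: $t_i=0$ for $k\le i\le k+D-1$, $t_i=1$ for $i\ge k+D$. Performance-evaluation function: $\mathcal J_{S_j}^\theta:=\mathbb E_{\mathcal T^{\theta-1}_{S_j+1}}[h_{S_{j+1}}\mid I_{S_j}^+]=\sum_{w\ge\theta}H(w,x_{S_j}^2)\,\mathbf d^T(\mathbf P_1\mathbf E)^{w-\theta}\mathbf P_0^{\theta-1}\mathbf P_1\boldsymbol\delta_{\gamma_{S_j}}$, where $H(w,y):=\bar a^{2w}y+\bar M(a^{2w}-1)-\max\{c^{2w}y,B\}$. *)

From Stdlib Require Import Reals Lra Lia ClassicalEpsilon.
Open Scope R_scope.

(* Channel states are indexed 0..n-1 (paper: 1..n).
   Matrices are functions nat -> nat -> R, only entries < n matter;
   row vectors are functions nat -> R. *)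
Definition mat := nat -> nat -> R.

Fixpoint fsum (n : nat) (f : nat -> R) : R :=
  match n with O => 0 | S k => fsum k f + f k end.

Definition mid : mat := fun i j => if Nat.eqb i j then 1 else 0.
Definition mmul (n : nat) (A B : mat) : mat :=
  fun i j => fsum n (fun k => A i k * B k j).
Fixpoint mpow (n : nat) (A : mat) (k : nat) : mat :=
  match k with O => mid | S k' => mmul n A (mpow n A k') end.
Definition mdiag (e : nat -> R) : mat := fun i j => if Nat.eqb i j then e i else 0.
Definition msub (A B : mat) : mat := fun i j => A i j - B i j.
Definition mscale (b : R) (A : mat) : mat := fun i j => b * A i j.

Definition is_inverse (n : nat) (M N : mat) : Prop :=
  forall i j, (i < n)%nat -> (j < n)%nat ->
    mmul n M N i j = mid i j /\ mmul n N M i j = mid i j.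

(* The matrix inverse (chosen by classical choice; unique when it exists). *)
Definition mat_inv (n : nat) (M : mat) : mat :=
  epsilon (inhabits mid) (fun N => is_inverse n M N).

Definition col_stochastic (n : nat) (P : mat) : Prop :=
  (forall i j, (i < n)%nat -> (j < n)%nat -> 0 <= P i j) /\
  (forall j, (j < n)%nat -> fsum n (fun i => P i j) = 1).

(* (lr + i li) is a complex eigenvalue of the real n x n matrix A:
   there is a nonzero complex vector vr + i vi with A v = lambda v. *)
Definition is_eigval (n : nat) (A : mat) (lr li : R) : Prop :=
  exists vr vi : nat -> R,
    (exists i, (i < n)%nat /\ (vr i <> 0 \/ vi i <> 0)) /\
    forall i, (i < n)%nat ->
      fsum n (fun k => A i k * vr k) = lr * vr i - li * vi i /\
      fsum n (fun k => A i k * vi k) = lr * vi i + li * vr i.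

Definition spectral_radius (n : nat) (A : mat) : R :=
  epsilon (inhabits 0)
    (fun r => is_lub (fun m => exists lr li, is_eigval n A lr li /\
                                   m = sqrt (lr ^ 2 + li ^ 2)) r).

Definition Hfun (a abar c B Mbar : R) (w : nat) (y : R) : R :=
  abar ^ (2 * w) * y + Mbar * (a ^ (2 * w) - 1) - Rmax (c ^ (2 * w) * y) B.

Definition P1E (n : nat) (P1 : mat) (e : nat -> R) : mat := mmul n P1 (mdiag e).

(* w-th term of the performance-evaluation series:
   H(w,y) d^T (P1 E)^{w-theta} P0^{theta-1} P1 delta_gamma, with d = 1 - e. *)
Definition J_term (n : nat) (a abar c B Mbar : R) (P0 P1 : mat) (e : nat -> R)
    (theta : nat) (y : R) (gamma : nat) (w : nat) : R :=
  Hfun a abar c B Mbar w y *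
  fsum n (fun i => (1 - e i) *
    mmul n (mpow n (P1E n P1 e) (w - theta))
           (mmul n (mpow n P0 (theta - 1)) P1) i gamma).

Definition Zrow (n : nat) (P1 : mat) (e : nat -> R) (theta : nat) (b : R) : nat -> R :=
  fun i => b ^ theta *
    fsum n (fun k => (1 - e k) *
      mat_inv n (msub mid (mscale b (P1E n P1 e))) k i).

Definition Qrow (n : nat) (a abar c B Mbar : R) (P1 : mat) (e : nat -> R)
    (theta : nat) : nat -> R :=
  fun i => (Zrow n P1 e theta (abar ^ 2) i - Zrow n P1 e theta (c ^ 2) i)
             * B / c ^ (2 * theta)
           + Mbar * (Zrow n P1 e theta (a ^ 2) i - Zrow n P1 e theta 1 i).

(* Write [N = P1 E] and [Phi_l(t, y) = sum_k (d^T N^k)_l H(t + k, y)] for the expected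
   performance at the next reception when transmissions resume [t] steps ahead in channel state
   [l]; the evaluation function [J^theta] is the average of [Phi_l(theta, x^2)] against the
   column [P0^(theta-1) P1 delta_gamma] of a column-stochastic matrix.

   Since [N >= 0] and [a^2 rho(N) < 1], the Neumann series [sum_k a^(2k) N^k] converges: at
   the radius of convergence [r] the series would diverge, normalised columns of the
   resolvent just below [r] would be approximate nonnegative eigenvectors, so [I - r N] would
   be singular and [1/r <= rho(N)].  Hence every [Z_theta(b)] is the power series
   [sum_k b^(theta+k) (d^T N^k)] and [Q(D)_l] is the series of [(d^T N^k)_l] against a bound
   of [H(D + k, .)], so [Phi_l(D, y) <= Q(D)_l < 0].

   Two structural facts finish the proof.  First, [Phi_l(0, y)] is [(1 - e_l) H(0, y) <= 0]
   plus [e_l] times an average of the [Phi_j(1, y)].  Second, [t |-> Phi_l(t, .)] lies below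
   its chord on [[0, D]]: rescaling [y] by [c^(2t)] makes the [max] terms of [H] coincide, and
   what remains are powers convex in the exponent.  The chord at [t = 1] forbids
   [sup Phi(1, .) >= 0], so [Phi(0, .) <= 0], and the chord then gives [Phi(t, .) <= Q/D < 0]
   for [1 <= t <= D]. *)

From Stdlib Require Import Reals Lra Lia ClassicalEpsilon Classical.
From Coquelicot Require Import Coquelicot.
Open Scope R_scope.

Lemma fsum_ext n f g : (forall k, (k < n)%nat -> f k = g k) -> fsum n f = fsum n g.
Proof.
  induction n; simpl; intros H; auto.
  rewrite IHn by (intros; apply H; lia). rewrite H by lia. reflexivity.
Qed.

Lemma fsum_plus n f g : fsum n (fun k => f k + g k) = fsum n f + fsum n g.
Proof. induction n; simpl; [lra|]. rewrite IHn. lra. Qed.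

Lemma fsum_minus n f g : fsum n (fun k => f k - g k) = fsum n f - fsum n g.
Proof. induction n; simpl; [lra|]. rewrite IHn. lra. Qed.

Lemma fsum_mult_l n c f : fsum n (fun k => c * f k) = c * fsum n f.
Proof. induction n; simpl; [lra|]. rewrite IHn. lra. Qed.

Lemma fsum_mult_r n c f : fsum n (fun k => f k * c) = fsum n f * c.
Proof. induction n; simpl; [lra|]. rewrite IHn. lra. Qed.

Lemma fsum_const n c : fsum n (fun _ => c) = INR n * c.
Proof. induction n; simpl fsum; [simpl; ring|]. rewrite IHn, S_INR. ring. Qed.

Lemma fsum_le n f g : (forall k, (k < n)%nat -> f k <= g k) -> fsum n f <= fsum n g.
Proof.
  induction n; simpl; intros H; [lra|].
  assert (fsum n f <= fsum n g) by (apply IHn; intros; apply H; lia).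
  assert (f n <= g n) by (apply H; lia). lra.
Qed.

Lemma fsum_nonneg n f : (forall k, (k < n)%nat -> 0 <= f k) -> 0 <= fsum n f.
Proof.
  intros H. replace 0 with (fsum n (fun _ => 0)) by (rewrite fsum_const; ring).
  apply fsum_le, H.
Qed.

Lemma fsum_term_le n f l :
  (forall k, (k < n)%nat -> 0 <= f k) -> (l < n)%nat -> f l <= fsum n f.
Proof.
  induction n; intros Hf Hl; [lia|]. simpl.
  assert (0 <= fsum n f) by (apply fsum_nonneg; intros; apply Hf; lia).
  destruct (Nat.eq_dec l n) as [->|]; [lra|].
  assert (f l <= fsum n f) by (apply IHn; [intros; apply Hf|]; lia).
  assert (0 <= f n) by (apply Hf; lia). lra.
Qed.

Lemma Rabs_fsum n f : Rabs (fsum n f) <= fsum n (fun k => Rabs (f k)).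
Proof.
  induction n; simpl; [rewrite Rabs_R0; lra|].
  eapply Rle_trans; [apply Rabs_triang|]. lra.
Qed.

Lemma fsum_comm n m (f : nat -> nat -> R) :
  fsum n (fun i => fsum m (fun j => f i j)) = fsum m (fun j => fsum n (fun i => f i j)).
Proof.
  induction n; simpl.
  - rewrite fsum_const. ring.
  - rewrite IHn, <- fsum_plus. reflexivity.
Qed.

Lemma fsum_add_len p q f : fsum (p + q) f = fsum p f + fsum q (fun s => f (p + s)%nat).
Proof.
  induction q; [rewrite Nat.add_0_r; simpl; ring|].
  rewrite Nat.add_succ_r. simpl fsum. rewrite IHq. ring.
Qed.

Lemma fsum_le_len p q f : (p <= q)%nat -> (forall k, 0 <= f k) -> fsum p f <= fsum q f.
Proof.
  intros H Hf. replace q with (p + (q - p))%nat by lia. rewrite fsum_add_len.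
  assert (0 <= fsum (q - p) (fun s => f (p + s)%nat)) by (apply fsum_nonneg; auto). lra.
Qed.

Lemma sum_f_R0_fsum a m : sum_f_R0 a m = fsum (S m) a.
Proof. induction m; simpl; [ring|]. simpl in IHm. rewrite IHm. ring. Qed.

Lemma fsum_mid_l n i f : (i < n)%nat -> fsum n (fun k => mid i k * f k) = f i.
Proof.
  unfold mid. induction n; intros Hi; [lia|]. simpl.
  destruct (Nat.eq_dec i n) as [->|Hne].
  - rewrite Nat.eqb_refl, (fsum_ext _ _ (fun _ => 0)), fsum_const; [ring|].
    intros k Hk. destruct (Nat.eqb_spec n k); [lia|ring].
  - rewrite IHn by lia. destruct (Nat.eqb_spec i n); [lia|ring].
Qed.

Lemma fsum_mid_r n i f : (i < n)%nat -> fsum n (fun k => f k * mid k i) = f i.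
Proof.
  intros Hi. rewrite <- (fsum_mid_l n i f Hi). apply fsum_ext. intros k _.
  unfold mid. destruct (Nat.eqb_spec k i), (Nat.eqb_spec i k); try lia; ring.
Qed.

Lemma fin_neg_upper_bound n (f : nat -> R) : (forall i, (i < n)%nat -> f i < 0) ->
  exists q, q < 0 /\ forall i, (i < n)%nat -> f i <= q.
Proof.
  induction n; intros H; [exists (-1); split; [lra|intros; lia]|].
  destruct IHn as [q [Hq Hq']]; [intros; apply H; lia|].
  exists (Rmax q (f n)). split; [apply Rmax_lub_lt; auto; apply H; lia|].
  intros i Hi. destruct (Nat.eq_dec i n) as [->|]; [apply Rmax_r|].
  eapply Rle_trans; [apply Hq'; lia|apply Rmax_l].
Qed.

Lemma fin_upper_bound n (f : nat -> R) : exists U, forall i, (i < n)%nat -> f i <= U.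
Proof.
  exists (fsum n (fun i => Rabs (f i))). intros i Hi.
  eapply Rle_trans; [apply Rle_abs|]. apply (fsum_term_le n (fun i => Rabs (f i))); auto.
  intros; apply Rabs_pos.
Qed.

Lemma cauchy_schwarz n a x :
  (fsum n (fun k => a k * x k)) ^ 2 <= fsum n (fun k => a k ^ 2) * fsum n (fun k => x k ^ 2).
Proof.
  set (Sa := fsum n (fun k => a k ^ 2)). set (Sx := fsum n (fun k => x k ^ 2)).
  set (Sax := fsum n (fun k => a k * x k)).
  assert (Hq : forall t, 0 <= Sa * t ^ 2 - 2 * t * Sax + Sx).
  { intros t. replace (Sa * t ^ 2 - 2 * t * Sax + Sx) with (fsum n (fun k => (a k * t - x k) ^ 2)).
    - apply fsum_nonneg; intros; apply pow2_ge_0.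
    - unfold Sa, Sax, Sx. rewrite <- fsum_mult_r, <- fsum_mult_l, <- fsum_minus, <- fsum_plus.
      apply fsum_ext. intros; ring. }
  assert (HSa : 0 <= Sa) by (apply fsum_nonneg; intros; apply pow2_ge_0).
  assert (HSx : 0 <= Sx) by (apply fsum_nonneg; intros; apply pow2_ge_0).
  destruct (Req_dec Sa 0) as [E|E].
  - destruct (Req_dec Sax 0) as [->|E'].
    + nra.
    + specialize (Hq ((Sx + 1) / (2 * Sax))). rewrite E in Hq.
      replace (0 * ((Sx + 1) / (2 * Sax)) ^ 2 - 2 * ((Sx + 1) / (2 * Sax)) * Sax + Sx)
        with (-1) in Hq by (field; auto). lra.
  - specialize (Hq (Sax / Sa)).
    replace (Sa * (Sax / Sa) ^ 2 - 2 * (Sax / Sa) * Sax + Sx) with ((Sa * Sx - Sax ^ 2) / Sa) in Hq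
      by (field; auto).
    assert (0 <= Sa * Sx - Sax ^ 2); [|lra].
    apply Rmult_le_reg_r with (/ Sa); [apply Rinv_0_lt_compat; lra|]. lra.
Qed.

Definition nonneg_mat n (N : mat) := forall i j, (i < n)%nat -> (j < n)%nat -> 0 <= N i j.

Definition msumall n (N : mat) := fsum n (fun i => fsum n (fun j => N i j)).

Lemma mid_bounds i j : 0 <= mid i j <= 1.
Proof. unfold mid. destruct (Nat.eqb i j); lra. Qed.

Lemma msumall_nonneg n N : nonneg_mat n N -> 0 <= msumall n N.
Proof. intros. apply fsum_nonneg; intros; apply fsum_nonneg; auto. Qed.

Lemma row_sum_le_msumall n N i : nonneg_mat n N -> (i < n)%nat ->
  fsum n (fun j => N i j) <= msumall n N.
Proof.
  intros HN Hi. apply (fsum_term_le n (fun i => fsum n (fun j => N i j))); auto.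
  intros; apply fsum_nonneg; auto.
Qed.

Lemma entry_le_msumall n N i j : nonneg_mat n N -> (i < n)%nat -> (j < n)%nat ->
  N i j <= msumall n N.
Proof.
  intros HN Hi Hj. eapply Rle_trans; [|exact (row_sum_le_msumall n N i HN Hi)].
  apply (fsum_term_le n (fun j => N i j)); auto.
Qed.

Lemma mmul_prob_vec_bounds n N z i : nonneg_mat n N ->
  (forall l, (l < n)%nat -> 0 <= z l) -> fsum n z = 1 -> (i < n)%nat ->
  0 <= fsum n (fun l => N i l * z l) <= msumall n N.
Proof.
  intros HN Hz0 Hz1 Hi. split.
  - apply fsum_nonneg. intros l Hl. apply Rmult_le_pos; auto.
  - rewrite <- (Rmult_1_r (msumall n N)), <- Hz1, <- fsum_mult_l.
    apply fsum_le. intros l Hl. apply Rmult_le_compat_r; auto. apply entry_le_msumall; auto.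
Qed.

Lemma mmul_ext n A A' B B' i j :
  (forall k, (k < n)%nat -> A i k = A' i k) -> (forall k, (k < n)%nat -> B k j = B' k j) ->
  mmul n A B i j = mmul n A' B' i j.
Proof. intros HA HB. apply fsum_ext. intros. rewrite HA, HB; auto. Qed.

Lemma mmul_assoc n A B C i j :
  mmul n (mmul n A B) C i j = mmul n A (mmul n B C) i j.
Proof.
  unfold mmul.
  rewrite (fsum_ext n _ (fun k => fsum n (fun l => A i l * B l k * C k j)))
    by (intros; rewrite <- fsum_mult_r; auto).
  rewrite fsum_comm. apply fsum_ext. intros. rewrite <- fsum_mult_l.
  apply fsum_ext. intros; ring.
Qed.

Lemma mmul_mid_l n A i j : (i < n)%nat -> mmul n mid A i j = A i j.
Proof. intros. apply (fsum_mid_l n i (fun k => A k j)); auto. Qed.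

Lemma mmul_mid_r n A i j : (j < n)%nat -> mmul n A mid i j = A i j.
Proof. intros. apply (fsum_mid_r n j (fun k => A i k)); auto. Qed.

Lemma mmul_nonneg n A B i j : (forall k, (k < n)%nat -> 0 <= A i k) ->
  (forall k, (k < n)%nat -> 0 <= B k j) -> 0 <= mmul n A B i j.
Proof. intros. apply fsum_nonneg. intros. apply Rmult_le_pos; auto. Qed.

Lemma mpow_S_r n A k i j : (i < n)%nat -> (j < n)%nat ->
  mpow n A (S k) i j = mmul n (mpow n A k) A i j.
Proof.
  revert i j. induction k; intros i j Hi Hj.
  - simpl. rewrite mmul_mid_r, mmul_mid_l; auto.
  - change (mpow n A (S (S k)) i j) with (mmul n A (mpow n A (S k)) i j).
    rewrite (mmul_ext n A A _ (mmul n (mpow n A k) A)); auto.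
    rewrite <- mmul_assoc. reflexivity.
Qed.

Lemma mpow_nonneg n N k : nonneg_mat n N -> nonneg_mat n (mpow n N k).
Proof.
  intros HN. induction k; intros i j Hi Hj; simpl; [apply mid_bounds|].
  apply mmul_nonneg; intros; [apply HN|apply IHk]; auto.
Qed.

Lemma col_stochastic_mid n : col_stochastic n mid.
Proof.
  split; [intros; apply mid_bounds|].
  intros j Hj. rewrite <- (fsum_mid_r n j (fun _ => 1) Hj). apply fsum_ext. intros; ring.
Qed.

Lemma col_stochastic_mmul n A B :
  col_stochastic n A -> col_stochastic n B -> col_stochastic n (mmul n A B).
Proof.
  intros [HA0 HA1] [HB0 HB1]. split.
  - intros i j Hi Hj. apply mmul_nonneg; intros; [apply HA0|apply HB0]; auto.
  - intros j Hj. unfold mmul. rewrite fsum_comm, <- (HB1 j Hj).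
    apply fsum_ext. intros k Hk. rewrite fsum_mult_r, HA1; auto. ring.
Qed.

Lemma col_stochastic_mpow n A k : col_stochastic n A -> col_stochastic n (mpow n A k).
Proof.
  intros H. induction k; simpl; [apply col_stochastic_mid|]. apply col_stochastic_mmul; auto.
Qed.

Lemma P1E_entry n P1 e i j : (j < n)%nat -> P1E n P1 e i j = P1 i j * e j.
Proof.
  intros Hj. unfold P1E, mmul, mdiag.
  rewrite <- (fsum_mid_r n j (fun k => P1 i k * e k) Hj). apply fsum_ext. intros k _.
  unfold mid. destruct (Nat.eqb_spec k j); subst; ring.
Qed.

Lemma P1E_nonneg n P1 e : col_stochastic n P1 -> (forall i, (i < n)%nat -> 0 <= e i <= 1) ->
  nonneg_mat n (P1E n P1 e).
Proof.
  intros [HP _] He i j Hi Hj. rewrite P1E_entry by auto.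
  apply Rmult_le_pos; [apply HP|apply He]; auto.
Qed.

(* Coquelicot's series lemmas are stated over a generic normed module; these versions fix the
   carrier to [R], so that [ring] and [field] recognise the resulting equations. *)
Lemma ex_series_Rmult_l c (a : nat -> R) : ex_series a -> ex_series (fun k => c * a k).
Proof. intros H. exact (ex_series_scal_l c a H). Qed.

Lemma ex_series_Rabs_le (a b : nat -> R) :
  (forall k, Rabs (a k) <= b k) -> ex_series b -> ex_series a.
Proof. intros. apply (@ex_series_le R_AbsRing R_CompleteNormedModule a b); auto. Qed.

Lemma is_series_Rext (a b : nat -> R) l :
  (forall k, a k = b k) -> is_series a l -> is_series b l.
Proof. apply is_series_ext. Qed.

Lemma is_series_Rplus (a b : nat -> R) la lb :
  is_series a la -> is_series b lb -> is_series (fun k => a k + b k) (la + lb).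
Proof. exact (is_series_plus a b la lb). Qed.

Lemma is_series_Rminus (a b : nat -> R) la lb :
  is_series a la -> is_series b lb -> is_series (fun k => a k - b k) (la - lb).
Proof. exact (is_series_minus a b la lb). Qed.

Lemma is_series_Rmult_l c (a : nat -> R) la : is_series a la -> is_series (fun k => c * a k) (c * la).
Proof. exact (is_series_scal_l c a la). Qed.

Lemma is_series_R0 : is_series (fun _ : nat => 0) 0.
Proof.
  assert (H := is_series_Rmult_l 0 _ _ (is_series_geom (/ 2) ltac:(rewrite Rabs_pos_eq; lra))).
  rewrite Rmult_0_l in H. eapply is_series_ext; [|exact H]. intros; simpl; ring.
Qed.

Lemma Series_zero : Series (fun _ : nat => 0) = 0.
Proof. apply is_series_unique, is_series_R0. Qed.

Lemma Series_le_pointwise (a b : nat -> R) :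
  ex_series a -> ex_series b -> (forall k, a k <= b k) -> Series a <= Series b.
Proof.
  intros Ha Hb H.
  assert (0 <= Series (fun k => b k - a k)).
  { rewrite <- Series_zero. apply Series_le; [intros k; specialize (H k); lra|].
    apply (ex_series_minus b a); auto. }
  rewrite Series_minus in H0; auto. lra.
Qed.

Lemma fsum_le_Series (a : nat -> R) m :
  ex_series a -> (forall k, 0 <= a k) -> fsum m a <= Series a.
Proof.
  intros He Ha. destruct m as [|m].
  - simpl. rewrite <- Series_zero. apply Series_le; auto. intros; split; [lra|auto].
  - rewrite (Series_incr_n a (S m)) by (auto; lia). simpl Nat.pred. rewrite sum_f_R0_fsum.
    assert (0 <= Series (fun k => a (S m + k)%nat)); [|lra].
    rewrite <- Series_zero. apply Series_le; [intros; split; [lra|auto]|].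
    apply ex_series_incr_n; auto.
Qed.

Lemma ex_series_fsum n (f : nat -> nat -> R) : (forall l, (l < n)%nat -> ex_series (f l)) ->
  ex_series (fun k => fsum n (fun l => f l k)).
Proof.
  induction n; intros H; simpl.
  - exists 0. apply is_series_R0.
  - apply (ex_series_plus (fun k => fsum n (fun l => f l k)) (f n)).
    + apply IHn. intros; apply H; lia.
    + apply H; lia.
Qed.

Lemma is_series_fsum n (f : nat -> nat -> R) (L : nat -> R) :
  (forall l, (l < n)%nat -> is_series (f l) (L l)) ->
  is_series (fun k => fsum n (fun l => f l k)) (fsum n L).
Proof.
  induction n; intros H; simpl; [apply is_series_R0|].
  apply is_series_Rplus; [apply IHn; intros|]; apply H; lia.
Qed.

Lemma Series_fsum n (f : nat -> nat -> R) : (forall l, (l < n)%nat -> ex_series (f l)) ->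
  Series (fun k => fsum n (fun l => f l k)) = fsum n (fun l => Series (f l)).
Proof.
  induction n; intros H; simpl.
  - apply Series_zero.
  - rewrite Series_plus, IHn; auto.
    apply ex_series_fsum. all: intros; apply H; lia.
Qed.

Lemma partial_sums_unbounded (a : nat -> R) :
  (forall k, 0 <= a k) -> ~ ex_series a -> forall K, exists m, K < fsum m a.
Proof.
  intros Ha Hdiv K. apply NNPP. intros Hb. apply Hdiv, ex_series_Reals_1, growing_cv.
  - intros m. simpl. specialize (Ha (S m)). lra.
  - exists K. intros x [m ->]. rewrite sum_f_R0_fsum.
    destruct (Rle_lt_dec (fsum (S m) a) K); auto. exfalso; eauto.
Qed.

Lemma pow_1_minus_ge x m : 0 <= x <= 1 -> 1 - INR m * x <= (1 - x) ^ m.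
Proof.
  intros Hx. induction m; [simpl; lra|]. rewrite S_INR. simpl pow.
  assert (0 <= (1 - x) ^ m) by (apply pow_le; lra).
  assert (0 <= INR m) by apply pos_INR. nra.
Qed.

Lemma pow_le_one x k : 0 <= x <= 1 -> x ^ k <= 1.
Proof. intros. rewrite <- (pow1 k). apply pow_incr. lra. Qed.

Lemma pow_anti x k m : 0 <= x <= 1 -> (k <= m)%nat -> x ^ m <= x ^ k.
Proof.
  intros Hx Hkm. replace m with (k + (m - k))%nat by lia. rewrite pow_add.
  assert (0 <= x ^ k) by (apply pow_le; lra).
  assert (x ^ (m - k) <= 1) by (apply pow_le_one; lra). nra.
Qed.

(** * Neumann series of a nonnegative matrix *)

Definition neumann_cv n (N : mat) (t : R) :=
  forall i j, (i < n)%nat -> (j < n)%nat -> ex_series (fun k => t ^ k * mpow n N k i j).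

Definition neumann n (N : mat) (t : R) : mat :=
  fun i j => Series (fun k => t ^ k * mpow n N k i j).

Lemma neumann_row n N t i j : (i < n)%nat -> (j < n)%nat -> neumann_cv n N t ->
  neumann n N t i j = mid i j + t * fsum n (fun l => neumann n N t i l * N l j).
Proof.
  intros Hi Hj Hc. unfold neumann. rewrite Series_incr_1 by (apply Hc; auto).
  simpl (t ^ 0). rewrite Rmult_1_l. f_equal.
  rewrite (Series_ext _ (fun k => fsum n (fun l => t * ((t ^ k * mpow n N k i l) * N l j)))).
  - rewrite Series_fsum.
    + rewrite <- fsum_mult_l. apply fsum_ext. intros l Hl.
      rewrite Series_scal_l, Series_scal_r. ring.
    + intros l Hl. apply ex_series_Rmult_l, ex_series_scal_r, Hc; auto.
  - intros k. rewrite mpow_S_r by auto. unfold mmul. simpl pow.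
    rewrite <- fsum_mult_l. apply fsum_ext. intros; ring.
Qed.

Lemma neumann_col n N t i j : (i < n)%nat -> (j < n)%nat -> neumann_cv n N t ->
  neumann n N t i j = mid i j + t * fsum n (fun l => N i l * neumann n N t l j).
Proof.
  intros Hi Hj Hc. unfold neumann. rewrite Series_incr_1 by (apply Hc; auto).
  simpl (t ^ 0). rewrite Rmult_1_l. f_equal.
  rewrite (Series_ext _ (fun k => fsum n (fun l => t * (N i l * (t ^ k * mpow n N k l j))))).
  - rewrite Series_fsum.
    + rewrite <- fsum_mult_l. apply fsum_ext. intros l Hl.
      rewrite !Series_scal_l. ring.
    + intros l Hl. apply ex_series_Rmult_l, ex_series_Rmult_l, Hc; auto.
  - intros k. simpl. unfold mmul. rewrite <- fsum_mult_l. apply fsum_ext. intros; ring.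
Qed.

Lemma not_neumann_cv_entry n N t : ~ neumann_cv n N t ->
  exists i j, (i < n)%nat /\ (j < n)%nat /\ ~ ex_series (fun k => t ^ k * mpow n N k i j).
Proof.
  intros Hnc. apply NNPP. intros Hc. apply Hnc. intros i j Hi Hj. apply NNPP. intros Hij.
  apply Hc. exists i, j. auto.
Qed.

Lemma neumann_row_sum n N t i : (i < n)%nat -> neumann_cv n N t ->
  fsum n (neumann n N t i) = 1 + t * fsum n (fun l => N i l * fsum n (neumann n N t l)).
Proof.
  intros Hi Hc.
  rewrite (fsum_ext n _ (fun j => mid i j + t * fsum n (fun l => N i l * neumann n N t l j)))
    by (intros; apply neumann_col; auto).
  rewrite fsum_plus. f_equal.
  - rewrite <- (fsum_mid_l n i (fun _ => 1) Hi). apply fsum_ext. intros; ring.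
  - rewrite fsum_mult_l. f_equal. rewrite fsum_comm.
    apply fsum_ext. intros l Hl. apply fsum_mult_l.
Qed.

Section NonnegNeumann.

Variables (n : nat) (N : mat).
Hypothesis HN : nonneg_mat n N.

Lemma neumann_term_nonneg t k i j : 0 <= t -> (i < n)%nat -> (j < n)%nat ->
  0 <= t ^ k * mpow n N k i j.
Proof. intros. apply Rmult_le_pos; [apply pow_le; auto|apply mpow_nonneg; auto]. Qed.

Lemma neumann_nonneg t i j : 0 <= t -> (i < n)%nat -> (j < n)%nat -> neumann_cv n N t ->
  0 <= neumann n N t i j.
Proof.
  intros Ht Hi Hj Hc. apply (fsum_le_Series _ 0); [apply Hc; auto|].
  intros; apply neumann_term_nonneg; auto.
Qed.

Lemma neumann_cv_mono s t : 0 <= s <= t -> neumann_cv n N t -> neumann_cv n N s.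
Proof.
  intros Hs Ht i j Hi Hj. apply (ex_series_Rabs_le _ (fun k => t ^ k * mpow n N k i j)).
  - intros k. rewrite Rabs_pos_eq by (apply neumann_term_nonneg; auto; lra).
    apply Rmult_le_compat_r; [apply mpow_nonneg; auto|apply pow_incr; lra].
  - apply Ht; auto.
Qed.

Lemma mpow_subinvariant (u : nat -> R) lam :
  (forall i, (i < n)%nat -> 0 <= u i) -> 0 <= lam ->
  (forall i, (i < n)%nat -> fsum n (fun l => N i l * u l) <= lam * u i) ->
  forall k i, (i < n)%nat -> fsum n (fun l => mpow n N k i l * u l) <= lam ^ k * u i.
Proof.
  intros Hu Hlam Hsub k. induction k; intros i Hi.
  - simpl. rewrite fsum_mid_l by auto. lra.
  - simpl (mpow n N (S k)). unfold mmul.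
    rewrite (fsum_ext n _ (fun l => fsum n (fun m => N i m * (mpow n N k m l * u l))))
      by (intros; rewrite <- fsum_mult_r; apply fsum_ext; intros; ring).
    rewrite fsum_comm.
    apply Rle_trans with (fsum n (fun m => lam ^ k * (N i m * u m))).
    + apply fsum_le. intros m Hm. rewrite fsum_mult_l.
      replace (lam ^ k * (N i m * u m)) with (N i m * (lam ^ k * u m)) by ring.
      apply Rmult_le_compat_l; auto.
    + rewrite fsum_mult_l. simpl pow.
      assert (0 <= lam ^ k) by (apply pow_le; auto).
      specialize (Hsub i Hi). nra.
Qed.

Lemma neumann_cv_of_subinvariant (u : nat -> R) lam t :
  (forall i, (i < n)%nat -> 1 <= u i) -> 0 <= lam ->
  (forall i, (i < n)%nat -> fsum n (fun l => N i l * u l) <= lam * u i) ->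
  0 <= t -> t * lam < 1 -> neumann_cv n N t.
Proof.
  intros Hu Hlam Hsub Ht Htl i j Hi Hj.
  apply (ex_series_Rabs_le _ (fun k => u i * (t * lam) ^ k)).
  - intros k. rewrite Rabs_pos_eq by (apply neumann_term_nonneg; auto).
    assert (Hk : mpow n N k i j <= lam ^ k * u i).
    { eapply Rle_trans; [|apply (mpow_subinvariant u); auto; intros l Hl; specialize (Hu l Hl); lra].
      eapply Rle_trans; [|apply (fsum_term_le n (fun l => mpow n N k i l * u l) j); auto].
      - assert (0 <= mpow n N k i j) by (apply mpow_nonneg; auto).
        specialize (Hu j Hj). nra.
      - intros l Hl. apply Rmult_le_pos; [apply mpow_nonneg; auto|specialize (Hu l Hl); lra]. }
    rewrite Rpow_mult_distr.
    assert (0 <= t ^ k) by (apply pow_le; auto). nra.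
  - apply ex_series_Rmult_l, ex_series_geom. rewrite Rabs_pos_eq; nra.
Qed.

Lemma neumann_cv_pos : exists t, 0 < t /\ neumann_cv n N t.
Proof.
  assert (Hs := msumall_nonneg n N HN).
  exists (/ (msumall n N + 1)). split; [apply Rinv_0_lt_compat; lra|].
  apply (neumann_cv_of_subinvariant (fun _ => 1) (msumall n N)); auto.
  - intros; lra.
  - intros i Hi. rewrite fsum_mult_r, !Rmult_1_r. exact (row_sum_le_msumall n N i HN Hi).
  - apply Rlt_le, Rinv_0_lt_compat; lra.
  - apply Rmult_lt_reg_l with (msumall n N + 1); [lra|].
    field_simplify; lra.
Qed.

(* The row sums [u] of the Neumann series satisfy [u = 1 + r N u], hence [N u <= lam u]
   with [lam < 1 / r]: the convergence radius is never attained. *)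
Lemma neumann_cv_open r : 0 < r -> neumann_cv n N r -> exists t, r < t /\ neumann_cv n N t.
Proof.
  intros Hr Hc.
  set (u := fun i => fsum n (neumann n N r i)).
  assert (Hu_eq : forall i, (i < n)%nat -> u i = 1 + r * fsum n (fun l => N i l * u l))
    by (intros; apply neumann_row_sum; auto).
  assert (HNu : forall i, (i < n)%nat -> 0 <= fsum n (fun l => N i l * u l)).
  { intros i Hi. apply fsum_nonneg. intros l Hl. apply Rmult_le_pos; [apply HN; auto|].
    apply fsum_nonneg. intros; apply neumann_nonneg; auto; lra. }
  assert (Hu1 : forall i, (i < n)%nat -> 1 <= u i).
  { intros i Hi. rewrite Hu_eq by auto. specialize (HNu i Hi). nra. }
  set (U := 1 + fsum n u).
  assert (HuU : forall i, (i < n)%nat -> u i <= U).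
  { intros i Hi. assert (u i <= fsum n u); [|unfold U; lra].
    apply fsum_term_le; auto. intros l Hl. specialize (Hu1 l Hl). lra. }
  assert (HU : 1 <= U).
  { unfold U. assert (0 <= fsum n u); [|lra].
    apply fsum_nonneg. intros l Hl. specialize (Hu1 l Hl). lra. }
  set (lam := (1 - / U) / r).
  assert (HUinv : 0 < / U <= 1).
  { split; [apply Rinv_0_lt_compat; lra|]. rewrite <- Rinv_1. apply Rinv_le_contravar; lra. }
  exists (r * (1 + / (2 * U))). split.
  { assert (0 < / (2 * U)) by (apply Rinv_0_lt_compat; lra). nra. }
  apply (neumann_cv_of_subinvariant u lam); auto.
  - unfold lam. apply Rdiv_le_0_compat; lra.
  - intros i Hi. specialize (Hu_eq i Hi). specialize (HuU i Hi).
    set (s := fsum n (fun l => N i l * u l)) in *.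
    unfold lam. apply Rmult_le_reg_l with r; auto.
    replace (r * ((1 - / U) / r * u i)) with (u i - u i * / U) by (field; lra).
    assert (u i * / U <= 1); [|lra].
    apply Rmult_le_reg_r with U; [lra|]. field_simplify; lra.
  - assert (0 < / (2 * U)) by (apply Rinv_0_lt_compat; lra). nra.
  - unfold lam. replace (r * (1 + / (2 * U)) * ((1 - / U) / r)) with (1 - / (2 * U) - / (2 * U * U))
      by (field; lra).
    assert (0 < / (2 * U * U)) by (apply Rinv_0_lt_compat; nra).
    assert (0 < / (2 * U)) by (apply Rinv_0_lt_compat; lra). lra.
Qed.


End NonnegNeumann.

Module MatrixKernel.
From mathcomp Require Import all_boot all_algebra Rstruct.
Import GRing.Theory.
Open Scope ring_scope.
Open Scope R_scope.

Definition ext_vec {n} (v : 'I_n -> R) : nat -> R :=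
  fun k => if (insub k : option 'I_n) is Some i then v i else 0.

Definition ext_mat {n} (A : 'M[R]_n) : mat :=
  fun i j => if (insub i : option 'I_n) is Some i' then ext_vec (A i') j else 0.

Lemma ext_vecE n (v : 'I_n -> R) (i : 'I_n) : ext_vec v i = v i.
Proof. by rewrite /ext_vec valK. Qed.

Lemma ext_matE n (A : 'M[R]_n) (i j : 'I_n) : ext_mat A i j = A i j.
Proof. by rewrite /ext_mat valK ext_vecE. Qed.

Lemma fsum_big n (f : nat -> R) : fsum n f = (\sum_(k < n) f k)%R.
Proof. by elim: n => [|n IH]; rewrite ?big_ord0 // big_ord_recr /= IH. Qed.

Lemma kernel_or_left_inverse n (M : mat) :
  (exists v : nat -> R, (exists i, Peano.lt i n /\ v i <> 0) /\
      forall i, Peano.lt i n -> fsum n (fun k => M i k * v k) = 0)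
  \/ (exists W : mat, forall i j, Peano.lt i n -> Peano.lt j n -> mmul n W M i j = mid i j).
Proof.
  pose Mm : 'M[R]_n := \matrix_(i, j) M i j.
  have [d0|dn0] := boolP (\det Mm == 0).
  - left.
    have /det0P [v vn0 vM] : \det Mm^T == 0 by rewrite det_tr.
    exists (ext_vec (v ord0)); split.
    + have /existsP [i vi] : [exists i, v ord0 i != 0].
        apply: contraR vn0 => /existsPn v0; apply/eqP/rowP => i.
        by rewrite mxE; apply/eqP; move: (v0 i); rewrite negbK.
      by exists i; split; [apply/ltP|rewrite ext_vecE; apply/eqP].
    + move=> i /ltP hi; rewrite fsum_big.
      have := congr1 (fun A : 'rV_n => A ord0 (Ordinal hi)) vM; rewrite !mxE => vMi.
      by rewrite -[X in _ = X]vMi; apply: eq_bigr => k _; rewrite !mxE ext_vecE mulrC.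
  - right; exists (ext_mat (invmx Mm)) => i j /ltP hi /ltP hj.
    have uM : Mm \in unitmx by rewrite unitmxE unitfE.
    have := congr1 (fun A : 'M_n => A (Ordinal hi) (Ordinal hj)) (mulVmx uM).
    rewrite !mxE /mmul fsum_big => WM.
    have -> : mid i j = (i == j)%:R.
      by rewrite /mid; case: PeanoNat.Nat.eqb_spec => [->|/eqP/negbTE ->]; rewrite ?eqxx.
    rewrite -[X in _ = X]WM; apply: eq_bigr => k _.
    by rewrite (ext_matE _ (invmx Mm) (Ordinal hi)) !mxE.
Qed.

End MatrixKernel.

Set Bullet Behavior "Strict Subproofs".

(** * Spectral radius and convergence of the Neumann series *)

Definition frobenius_sq n (N : mat) := fsum n (fun i => fsum n (fun k => N i k ^ 2)).

Lemma eigval_modulus_le n N lr li : is_eigval n N lr li -> lr ^ 2 + li ^ 2 <= frobenius_sq n N.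
Proof.
  intros [vr [vi [[i0 [Hi0 Hnz]] Heq]]].
  set (S := fsum n (fun k => vr k ^ 2 + vi k ^ 2)).
  assert (HS : 0 < S).
  { assert (0 < vr i0 ^ 2 + vi i0 ^ 2).
    { assert (0 <= vr i0 ^ 2) by apply pow2_ge_0. assert (0 <= vi i0 ^ 2) by apply pow2_ge_0.
      destruct Hnz as [Hv|Hv]; apply pow2_gt_0 in Hv; lra. }
    eapply Rlt_le_trans; [eassumption|].
    apply (fsum_term_le n (fun k => vr k ^ 2 + vi k ^ 2)); auto.
    intros k _. assert (0 <= vr k ^ 2) by apply pow2_ge_0.
    assert (0 <= vi k ^ 2) by apply pow2_ge_0. lra. }
  apply Rmult_le_reg_r with S; auto.
  replace ((lr ^ 2 + li ^ 2) * S)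
    with (fsum n (fun i => (fsum n (fun k => N i k * vr k)) ^ 2 + (fsum n (fun k => N i k * vi k)) ^ 2)).
  - unfold frobenius_sq, S. rewrite <- fsum_mult_r. apply fsum_le. intros i Hi.
    assert (C1 := cauchy_schwarz n (fun k => N i k) vr).
    assert (C2 := cauchy_schwarz n (fun k => N i k) vi).
    rewrite fsum_plus. lra.
  - unfold S. rewrite <- fsum_mult_l. apply fsum_ext. intros i Hi.
    destruct (Heq i Hi) as [-> ->]. ring.
Qed.

Lemma eigval_modulus_le_spectral_radius n N lr li :
  is_eigval n N lr li -> sqrt (lr ^ 2 + li ^ 2) <= spectral_radius n N.
Proof.
  intros He. unfold spectral_radius.
  set (Es := fun m => exists lr li, is_eigval n N lr li /\ m = sqrt (lr ^ 2 + li ^ 2)).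
  assert (Hex : exists r, is_lub Es r).
  { destruct (completeness Es) as [r Hr].
    - exists (sqrt (frobenius_sq n N)). intros x [lr' [li' [He' ->]]].
      apply sqrt_le_1_alt, eigval_modulus_le; auto.
    - exists (sqrt (lr ^ 2 + li ^ 2)), lr, li. auto.
    - exists r; auto. }
  destruct (epsilon_spec (inhabits 0) (fun r => is_lub Es r) Hex) as [Hub _].
  apply Hub. exists lr, li. auto.
Qed.

Lemma no_left_inverse_of_approx_eigvec n N r :
  (forall eps, 0 < eps -> exists z : nat -> R,
     (forall l, (l < n)%nat -> 0 <= z l) /\ fsum n z = 1 /\
     forall i, (i < n)%nat -> Rabs (z i - r * fsum n (fun k => N i k * z k)) <= eps) ->
  ~ exists W : mat, forall i j, (i < n)%nat -> (j < n)%nat ->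
      mmul n W (msub mid (mscale r N)) i j = mid i j.
Proof.
  intros Happ [W HW].
  set (Wm := fsum n (fun i => fsum n (fun k => Rabs (W i k)))).
  assert (HWm : 0 <= Wm) by (apply fsum_nonneg; intros; apply fsum_nonneg; intros; apply Rabs_pos).
  set (eps := / (2 * (Wm + 1))).
  assert (Heps : 0 < eps) by (apply Rinv_0_lt_compat; lra).
  destruct (Happ eps Heps) as [z [Hz0 [Hz1 Hz]]].
  (* [z = W (I - r N) z], and [(I - r N) z] is small *)
  assert (Hzi : forall i, (i < n)%nat -> z i <= fsum n (fun k => Rabs (W i k)) * eps).
  { intros i Hi.
    assert (E : z i = fsum n (fun k => W i k * (z k - r * fsum n (fun j => N k j * z j)))).
    { rewrite <- (fsum_mid_l n i z Hi).
      rewrite (fsum_ext n _ (fun j => fsum n (fun k => W i k * msub mid (mscale r N) k j * z j)))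
        by (intros j Hj; rewrite <- HW by auto; symmetry; apply fsum_mult_r).
      rewrite fsum_comm. apply fsum_ext. intros k Hk.
      rewrite (fsum_ext n _ (fun j => W i k * (mid k j * z j - r * (N k j * z j))))
        by (intros; unfold msub, mscale; ring).
      rewrite fsum_mult_l, fsum_minus, fsum_mid_l, fsum_mult_l by auto. reflexivity. }
    rewrite E. eapply Rle_trans; [apply Rle_abs|]. eapply Rle_trans; [apply Rabs_fsum|].
    rewrite <- fsum_mult_r. apply fsum_le. intros k Hk. rewrite Rabs_mult.
    apply Rmult_le_compat_l; [apply Rabs_pos|apply Hz; auto]. }
  assert (1 <= Wm * eps).
  { rewrite <- Hz1. unfold Wm. rewrite <- fsum_mult_r. apply fsum_le. auto. }
  assert (Wm * eps < 1); [|lra].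
  unfold eps. apply Rmult_lt_reg_l with (2 * (Wm + 1)); [lra|]. field_simplify; lra.
Qed.

Section NonnegSpectrum.

Variables (n : nat) (N : mat).
Hypothesis HN : nonneg_mat n N.

Lemma neumann_entry_unbounded r i j : 0 < r -> (i < n)%nat -> (j < n)%nat ->
  (forall t, 0 <= t < r -> neumann_cv n N t) ->
  ~ ex_series (fun k => r ^ k * mpow n N k i j) ->
  forall K delta, 0 < delta ->
  exists t, 0 <= t < r /\ r - delta <= t /\ K <= neumann n N t i j.
Proof.
  intros Hr Hi Hj Hlt Hdiv K delta Hdelta.
  assert (Hnn : forall t k, 0 <= t -> 0 <= t ^ k * mpow n N k i j)
    by (intros; apply neumann_term_nonneg; auto).
  destruct (partial_sums_unbounded _ (fun k => Hnn r k (Rlt_le _ _ Hr)) Hdiv (2 * K)) as [m0 Hm0].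
  destruct (INR_archimed delta r Hdelta) as [m1 Hm1].
  set (m := S (Nat.max m0 m1)).
  assert (Hm : 1 <= INR m /\ INR m1 <= INR m) by (split; [apply (le_INR 1)|apply le_INR]; lia).
  set (x := / (2 * INR m)).
  assert (Hx : 0 < x <= / 2)
    by (split; [apply Rinv_0_lt_compat|apply Rinv_le_contravar]; lra).
  (* on the first [m] terms, [t := r (1 - x)] loses at most a factor 2 (Bernoulli) *)
  assert (Hhalf : forall k, (k <= m)%nat -> / 2 <= (1 - x) ^ k).
  { intros k Hk. eapply Rle_trans; [|apply pow_anti; [lra|exact Hk]].
    eapply Rle_trans; [|apply pow_1_minus_ge; lra].
    unfold x. right. field. lra. }
  assert (Ht : 0 <= r * (1 - x) < r) by (split; nra).
  exists (r * (1 - x)). split; [|split]; [exact Ht| |].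
  { assert (r * x <= delta); [|nra].
    assert (Hxm : INR m * x = / 2) by (unfold x; field; lra).
    assert (r * x <= INR m * delta * x) by (apply Rmult_le_compat_r; nra). nra. }
  eapply Rle_trans; [|apply (fsum_le_Series _ m); [apply Hlt; auto|intros; apply Hnn; lra]].
  apply Rle_trans with (/ 2 * fsum m (fun k => r ^ k * mpow n N k i j)).
  - assert (fsum m0 (fun k => r ^ k * mpow n N k i j) <= fsum m (fun k => r ^ k * mpow n N k i j))
      by (apply fsum_le_len; [lia|intros; apply Hnn; lra]).
    lra.
  - rewrite <- fsum_mult_l. apply fsum_le. intros k Hk. rewrite Rpow_mult_distr.
    assert (Hh := Hhalf k ltac:(lia)). assert (Hk0 := Hnn r k (Rlt_le _ _ Hr)). nra.
Qed.

(* Normalising a blown-up column [w] of the Neumann series just below [r] gives an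
   approximate eigenvector, because [w = e_j + t N w]. *)
Lemma approx_eigvec_at_boundary r : 0 < r ->
  (forall t, 0 <= t < r -> neumann_cv n N t) -> ~ neumann_cv n N r ->
  forall eps, 0 < eps -> exists z : nat -> R,
    (forall l, (l < n)%nat -> 0 <= z l) /\ fsum n z = 1 /\
    forall i, (i < n)%nat -> Rabs (z i - r * fsum n (fun l => N i l * z l)) <= eps.
Proof.
  intros Hr Hlt Hnc eps Heps.
  destruct (not_neumann_cv_entry n N r Hnc) as [i0 [j0 [Hi0 [Hj0 Hdiv]]]].
  set (Nm := msumall n N). assert (HNm : 0 <= Nm) by apply msumall_nonneg, HN.
  destruct (neumann_entry_unbounded r i0 j0 Hr Hi0 Hj0 Hlt Hdiv (2 / eps) (eps / (2 * (Nm + 1))))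
    as [t [Ht [Hrt Hbig]]].
  { apply Rdiv_lt_0_compat; lra. }
  assert (Hct := Hlt t Ht).
  set (w := fun l => neumann n N t l j0).
  assert (Hw0 : forall l, (l < n)%nat -> 0 <= w l) by (intros; apply neumann_nonneg; auto; lra).
  set (W := fsum n w).
  assert (HW : 2 / eps <= W) by (eapply Rle_trans; [exact Hbig|apply (fsum_term_le n w i0); auto]).
  assert (HWpos : 0 < W) by (assert (0 < 2 / eps) by (apply Rdiv_lt_0_compat; lra); lra).
  assert (Hz0 : forall l, (l < n)%nat -> 0 <= w l / W) by (intros; apply Rdiv_le_0_compat; auto).
  assert (Hz1 : fsum n (fun l => w l / W) = 1)
    by (unfold Rdiv; rewrite fsum_mult_r; fold W; field; lra).
  exists (fun l => w l / W). split; [|split]; auto.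
  intros i Hi.
  set (s := fsum n (fun l => N i l * (w l / W))).
  assert (E : w i / W - r * s = mid i j0 / W - (r - t) * s).
  { unfold w at 1. rewrite neumann_col by auto.
    change (fsum n (fun l => N i l * neumann n N t l j0)) with (fsum n (fun l => N i l * w l)).
    replace s with (fsum n (fun l => N i l * w l) / W).
    - field. lra.
    - unfold s, Rdiv. rewrite <- fsum_mult_r. apply fsum_ext. intros; ring. }
  rewrite E.
  assert (Hs : 0 <= s <= Nm) by exact (mmul_prob_vec_bounds n N _ i HN Hz0 Hz1 Hi).
  assert (Hmid : 0 <= mid i j0 / W <= eps / 2).
  { assert (Hm := mid_bounds i j0). split; [apply Rdiv_le_0_compat; lra|].
    apply Rle_trans with (1 / W); [apply Rmult_le_compat_r; [apply Rlt_le, Rinv_0_lt_compat|]; lra|].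
    apply Rmult_le_reg_r with W; auto. apply Rmult_le_reg_l with (2 / eps); [apply Rdiv_lt_0_compat; lra|].
    field_simplify; try lra. }
  assert (Hdrift : 0 <= (r - t) * s <= eps / 2).
  { split; [apply Rmult_le_pos; lra|].
    apply Rle_trans with (eps / (2 * (Nm + 1)) * Nm); [apply Rmult_le_compat; lra|].
    apply Rmult_le_reg_r with (2 * (Nm + 1)); [lra|]. field_simplify; nra. }
  apply Rabs_le. lra.
Qed.

Lemma neumann_cv_boundary A : 0 < A -> ~ neumann_cv n N A ->
  exists r, 0 < r <= A /\ (forall t, 0 <= t < r -> neumann_cv n N t) /\ ~ neumann_cv n N r.
Proof.
  intros HA HnA.
  set (E := fun t => 0 <= t /\ neumann_cv n N t).
  assert (HE : forall s t, E s -> 0 <= t <= s -> neumann_cv n N t)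
    by (intros s t [_ Hs] Ht; apply (neumann_cv_mono n N HN t s); auto).
  destruct (neumann_cv_pos n N HN) as [t0 [Ht0 Hc0]].
  destruct (completeness E) as [r [Hub Hlub]].
  { exists A. intros t Ht. destruct (Rle_lt_dec t A); auto.
    exfalso. apply HnA, (HE t); [auto|lra]. }
  { exists t0. split; auto; lra. }
  assert (Ht0r : t0 <= r) by (apply Hub; split; auto; lra).
  exists r. split; [split|split].
  - lra.
  - apply Hlub. intros t Ht. destruct (Rle_lt_dec t A); auto.
    exfalso. apply HnA, (HE t); [auto|lra].
  - intros t Ht. apply NNPP. intros Hnt.
    assert (r <= t); [|lra].
    apply Hlub. intros s Hs. destruct (Rle_lt_dec s t); auto.
    exfalso. apply Hnt, (HE s); [auto|lra].
  - intros Hcr. destruct (neumann_cv_open n N HN r) as [t [Hrt Hct]]; [lra|auto|].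
    assert (t <= r) by (apply Hub; split; auto; lra). lra.
Qed.

Lemma inv_eigval_at_boundary r : 0 < r ->
  (forall t, 0 <= t < r -> neumann_cv n N t) -> ~ neumann_cv n N r ->
  is_eigval n N (/ r) 0.
Proof.
  intros Hr Hlt Hnc.
  assert (Hnl := no_left_inverse_of_approx_eigvec n N r (approx_eigvec_at_boundary r Hr Hlt Hnc)).
  destruct (MatrixKernel.kernel_or_left_inverse n (msub mid (mscale r N)))
    as [[v [Hv0 Hv]]|Hw]; [|contradiction].
  exists v, (fun _ => 0). split; [destruct Hv0 as [i [Hi Hvi]]; exists i; auto|].
  intros i Hi. specialize (Hv i Hi).
  rewrite (fsum_ext n _ (fun k => mid i k * v k - r * (N i k * v k))) in Hv
    by (intros; unfold msub, mscale; ring).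
  rewrite fsum_minus, fsum_mid_l, fsum_mult_l in Hv by auto.
  split.
  - apply Rmult_eq_reg_l with r; [|lra]. field_simplify; lra.
  - rewrite (fsum_ext n _ (fun _ => 0)), fsum_const by (intros; ring). ring.
Qed.

Lemma neumann_cv_of_spectral_radius A : 0 < A -> A * spectral_radius n N < 1 ->
  neumann_cv n N A.
Proof.
  intros HA Hsp. apply NNPP. intros HnA.
  destruct (neumann_cv_boundary A HA HnA) as [r [Hr [Hlt Hnc]]].
  assert (Hs := eigval_modulus_le_spectral_radius n N _ _ (inv_eigval_at_boundary r (proj1 Hr) Hlt Hnc)).
  replace ((/ r) ^ 2 + 0 ^ 2) with ((/ r) ^ 2) in Hs by ring.
  rewrite sqrt_pow2 in Hs by (apply Rlt_le, Rinv_0_lt_compat; lra).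
  assert (A * / r <= A * spectral_radius n N) by (apply Rmult_le_compat_l; lra).
  assert (1 <= A * / r); [|lra].
  apply Rmult_le_reg_r with r; [lra|]. field_simplify; lra.
Qed.

End NonnegSpectrum.

Lemma neumann_is_inverse n N t :
  neumann_cv n N t -> is_inverse n (msub mid (mscale t N)) (neumann n N t).
Proof.
  intros Hc i j Hi Hj. unfold mmul, msub, mscale. split.
  - rewrite (fsum_ext n _ (fun l => mid i l * neumann n N t l j - t * (N i l * neumann n N t l j)))
      by (intros; ring).
    rewrite fsum_minus, fsum_mult_l, fsum_mid_l, neumann_col by auto. ring.
  - rewrite (fsum_ext n _ (fun l => neumann n N t i l * mid l j - t * (neumann n N t i l * N l j)))
      by (intros; ring).
    rewrite fsum_minus, fsum_mult_l, fsum_mid_r, neumann_row by auto. ring.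
Qed.

Lemma is_inverse_unique n M X Y : is_inverse n M X -> is_inverse n M Y ->
  forall i j, (i < n)%nat -> (j < n)%nat -> X i j = Y i j.
Proof.
  intros HX HY i j Hi Hj.
  rewrite <- (mmul_mid_r n X i j Hj), (mmul_ext n X X mid (mmul n M Y) i j); auto.
  - rewrite <- mmul_assoc, (mmul_ext n (mmul n X M) mid Y Y i j); auto.
    + apply mmul_mid_l; auto.
    + intros k Hk. apply HX; auto.
  - intros k Hk. symmetry. apply HY; auto.
Qed.

Lemma mat_inv_neumann n N t : neumann_cv n N t -> forall i j, (i < n)%nat -> (j < n)%nat ->
  mat_inv n (msub mid (mscale t N)) i j = neumann n N t i j.
Proof.
  intros Hc. apply is_inverse_unique with (msub mid (mscale t N)); [|apply neumann_is_inverse; auto].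
  unfold mat_inv. apply epsilon_spec. exists (neumann n N t). apply neumann_is_inverse; auto.
Qed.

(* [first_success n P1 e k i] is the [i]-th entry of the row vector [d^T (P1 E)^k]. *)
Definition first_success n (P1 : mat) (e : nat -> R) (k i : nat) : R :=
  fsum n (fun l => (1 - e l) * mpow n (P1E n P1 e) k l i).

Lemma first_success_nonneg n P1 e k i : col_stochastic n P1 ->
  (forall l, (l < n)%nat -> 0 <= e l <= 1) -> (i < n)%nat -> 0 <= first_success n P1 e k i.
Proof.
  intros HP1 He Hi. apply fsum_nonneg. intros l Hl. apply Rmult_le_pos.
  - specialize (He l Hl). lra.
  - apply mpow_nonneg; auto. apply P1E_nonneg; auto.
Qed.

Lemma first_success_0 n P1 e i : (i < n)%nat -> first_success n P1 e 0 i = 1 - e i.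
Proof. intros Hi. apply (fsum_mid_r n i (fun l => 1 - e l) Hi). Qed.

Lemma first_success_S n P1 e k i : (i < n)%nat ->
  first_success n P1 e (S k) i = e i * fsum n (fun j => P1 j i * first_success n P1 e k j).
Proof.
  intros Hi. unfold first_success.
  rewrite (fsum_ext n _ (fun l => fsum n (fun j => e i * (P1 j i * ((1 - e l) * mpow n (P1E n P1 e) k l j))))).
  - rewrite fsum_comm, <- fsum_mult_l. apply fsum_ext. intros j Hj.
    rewrite 2!fsum_mult_l. reflexivity.
  - intros l Hl. rewrite mpow_S_r by auto. unfold mmul. rewrite <- fsum_mult_l.
    apply fsum_ext. intros j Hj. rewrite P1E_entry by auto. ring.
Qed.

Lemma is_series_Zrow n P1 e th x i : (i < n)%nat -> neumann_cv n (P1E n P1 e) x ->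
  is_series (fun k => x ^ (th + k) * first_success n P1 e k i) (Zrow n P1 e th x i).
Proof.
  intros Hi Hc. unfold Zrow, first_success.
  rewrite (fsum_ext n _ (fun l => (1 - e l) * neumann n (P1E n P1 e) x l i))
    by (intros; rewrite mat_inv_neumann; auto).
  apply (is_series_ext (fun k => x ^ th * fsum n (fun l => (1 - e l) * (x ^ k * mpow n (P1E n P1 e) k l i)))).
  - intros k. rewrite pow_add, Rmult_assoc. f_equal.
    rewrite <- fsum_mult_l. apply fsum_ext. intros; ring.
  - apply is_series_Rmult_l, is_series_fsum. intros l Hl.
    apply is_series_Rmult_l, Series_correct, Hc; auto.
Qed.

(** * The performance function *)

Lemma pow_sub_sign x p q : 0 < x -> (q <= p)%nat -> 0 <= (x - 1) * (x ^ p - x ^ q).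
Proof.
  intros Hx Hqp. replace p with (q + (p - q))%nat by lia. rewrite pow_add.
  replace ((x - 1) * (x ^ q * x ^ (p - q) - x ^ q)) with (x ^ q * ((x - 1) * (x ^ (p - q) - 1)))
    by ring.
  apply Rmult_le_pos; [apply pow_le; lra|].
  destruct (Rle_lt_dec 1 x).
  - assert (1 <= x ^ (p - q)) by (apply pow_R1_Rle; lra). nra.
  - assert (x ^ (p - q) <= 1) by (apply pow_le_one; lra). nra.
Qed.

Lemma geom_fsum x t : x ^ t - 1 = (x - 1) * fsum t (fun i => x ^ i).
Proof. induction t; simpl; [ring|]. rewrite Rmult_plus_distr_l, <- IHt. ring. Qed.

Lemma pow_chord_gap_nonneg x t m : 0 < x -> 0 <= INR t * x ^ t * (x ^ m - 1) - INR m * (x ^ t - 1).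
Proof.
  intros Hx. induction m; [simpl; lra|].
  rewrite S_INR. simpl pow.
  replace (INR t * x ^ t * (x * x ^ m - 1) - (INR m + 1) * (x ^ t - 1))
    with ((INR t * x ^ t * (x ^ m - 1) - INR m * (x ^ t - 1)) +
          fsum t (fun i => (x - 1) * (x ^ (t + m) - x ^ i))).
  - assert (0 <= fsum t (fun i => (x - 1) * (x ^ (t + m) - x ^ i)))
      by (apply fsum_nonneg; intros; apply pow_sub_sign; auto; lia).
    lra.
  - rewrite fsum_mult_l, fsum_minus, (Rmult_minus_distr_l (x - 1)), <- geom_fsum, fsum_const, pow_add.
    ring.
Qed.

Lemma pow_below_chord x t D : 0 < x -> (t <= D)%nat -> (0 < D)%nat ->
  x ^ t <= (1 - INR t / INR D) + (INR t / INR D) * x ^ D.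
Proof.
  intros Hx Ht HD. destruct (Nat.le_exists_sub t D Ht) as [m [-> _]].
  assert (HDp : 0 < INR (m + t)) by (apply lt_0_INR; lia).
  assert (H := pow_chord_gap_nonneg x t m Hx). rewrite plus_INR in *. rewrite pow_add.
  assert (0 <= (INR t * x ^ t * (x ^ m - 1) - INR m * (x ^ t - 1)) / (INR m + INR t))
    by (apply Rdiv_le_0_compat; lra).
  replace ((1 - INR t / (INR m + INR t)) + (INR t / (INR m + INR t)) * (x ^ m * x ^ t))
    with (x ^ t + (INR t * x ^ t * (x ^ m - 1) - INR m * (x ^ t - 1)) / (INR m + INR t))
    by (field; lra).
  lra.
Qed.

(* [perf b C A B Mb w y] is [H(w, y)] written with [b = abar^2], [C = c^2], [A = a^2]. *)
Definition perf (b C A B Mb : R) (w : nat) (y : R) : R :=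
  b ^ w * y + Mb * (A ^ w - 1) - Rmax (C ^ w * y) B.

Lemma Hfun_perf a abar c B Mbar w y :
  Hfun a abar c B Mbar w y = perf (abar ^ 2) (c ^ 2) (a ^ 2) B Mbar w y.
Proof. unfold Hfun, perf. rewrite !pow_mult. reflexivity. Qed.

Definition perf_bound (b C A B Mb : R) (D k : nat) : R :=
  B * (b ^ (D + k) / C ^ D - C ^ k) + Mb * (A ^ (D + k) - 1).

Section Perf.

Variables (b C A B Mb : R).
Hypotheses (Hb : 0 < b) (HbC : b <= C) (HC1 : C <= 1) (HA : 1 <= A) (HB : 0 <= B) (HMb : 0 <= Mb).

Lemma perf_0 y : perf b C A B Mb 0 y <= 0.
Proof. unfold perf. simpl. assert (1 * y <= Rmax (1 * y) B) by apply Rmax_l. lra. Qed.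

Lemma perf_le_growth w y : 0 <= y -> perf b C A B Mb w y <= Mb * A ^ w.
Proof.
  intros Hy. unfold perf.
  assert (b ^ w <= C ^ w) by (apply pow_incr; lra).
  assert (C ^ w * y <= Rmax (C ^ w * y) B) by apply Rmax_l.
  assert (b ^ w * y <= C ^ w * y) by (apply Rmult_le_compat_r; lra). nra.
Qed.

Lemma Rabs_perf_le w y : 0 <= y -> Rabs (perf b C A B Mb w y) <= (2 * y + 2 * Mb + B) * A ^ w.
Proof.
  intros Hy. unfold perf.
  assert (0 <= b ^ w <= 1) by (split; [apply pow_le|apply pow_le_one]; lra).
  assert (0 <= C ^ w <= 1) by (split; [apply pow_le|apply pow_le_one]; lra).
  assert (1 <= A ^ w) by (apply pow_R1_Rle; lra).
  assert (0 <= Rmax (C ^ w * y) B <= C ^ w * y + B).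
  { split; [apply Rle_trans with B; auto; apply Rmax_r|apply Rmax_lub; nra]. }
  apply Rabs_le. split; nra.
Qed.

Lemma perf_le_bound D k y : 0 <= y -> perf b C A B Mb (D + k) y <= perf_bound b C A B Mb D k.
Proof.
  intros Hy. unfold perf, perf_bound.
  assert (HCD : 0 < C ^ D) by (apply pow_lt; lra).
  assert (Hbw : b ^ (D + k) <= C ^ D * C ^ k) by (rewrite <- pow_add; apply pow_incr; lra).
  assert (HCk : 0 <= C ^ k <= 1) by (split; [apply pow_le|apply pow_le_one]; lra).
  rewrite (pow_add C D k).
  (* the worst case is [C^D y = B] *)
  destruct (Rle_lt_dec (B / C ^ D) y) as [Hyb|Hyb].
  - assert (C ^ D * C ^ k * y <= Rmax (C ^ D * C ^ k * y) B) by apply Rmax_l.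
    replace (B * (b ^ (D + k) / C ^ D - C ^ k)) with ((b ^ (D + k) - C ^ D * C ^ k) * (B / C ^ D))
      by (field; lra).
    assert ((b ^ (D + k) - C ^ D * C ^ k) * y <= (b ^ (D + k) - C ^ D * C ^ k) * (B / C ^ D))
      by (apply Rmult_le_compat_neg_l; lra).
    lra.
  - assert (B <= Rmax (C ^ D * C ^ k * y) B) by apply Rmax_r.
    replace (B * (b ^ (D + k) / C ^ D - C ^ k)) with (b ^ (D + k) * (B / C ^ D) - B * C ^ k)
      by (field; lra).
    assert (b ^ (D + k) * y <= b ^ (D + k) * (B / C ^ D))
      by (apply Rmult_le_compat_l; [apply pow_le|]; lra).
    assert (B * C ^ k <= B) by nra.
    lra.
Qed.

(* Splitting [t + k] between [k] and [D + k]: the [Rmax] terms coincide once [y] is rescaled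
   by the factors [C ^ t] and [C ^ -(D - t)], and the remaining powers are convex in the exponent. *)
Lemma perf_convex t D k y : 0 <= y -> (t <= D)%nat -> (0 < D)%nat ->
  perf b C A B Mb (t + k) y <=
  (1 - INR t / INR D) * perf b C A B Mb k (C ^ t * y) +
  (INR t / INR D) * perf b C A B Mb (D + k) (y / C ^ (D - t)).
Proof.
  intros Hy Ht HD. unfold perf.
  set (s := INR t / INR D).
  assert (HCt : 0 < C ^ t) by (apply pow_lt; lra).
  assert (HCDt : 0 < C ^ (D - t)) by (apply pow_lt; lra).
  assert (HCD : C ^ D = C ^ t * C ^ (D - t)) by (rewrite <- pow_add; f_equal; lia).
  replace (C ^ (D + k) * (y / C ^ (D - t))) with (C ^ (t + k) * y)
    by (rewrite !pow_add, HCD; field; lra).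
  replace (C ^ k * (C ^ t * y)) with (C ^ (t + k) * y) by (rewrite pow_add; ring).
  assert (Hchord_b : b ^ (t + k) * y <= (1 - s) * (b ^ k * (C ^ t * y)) + s * (b ^ (D + k) * (y / C ^ (D - t)))).
  { assert (Hr := pow_below_chord (b / C) t D ltac:(apply Rdiv_lt_0_compat; lra) Ht HD).
    assert (Hw : 0 <= b ^ k * C ^ t * y) by (apply Rmult_le_pos; [apply Rmult_le_pos; apply pow_le|]; lra).
    replace (b ^ (t + k) * y) with (b ^ k * C ^ t * y * (b / C) ^ t)
      by (unfold Rdiv; rewrite pow_add, Rpow_mult_distr, pow_inv; field; apply pow_nonzero; lra).
    replace ((1 - s) * (b ^ k * (C ^ t * y)) + s * (b ^ (D + k) * (y / C ^ (D - t))))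
      with (b ^ k * C ^ t * y * ((1 - s) + s * (b / C) ^ D))
      by (unfold Rdiv; rewrite pow_add, Rpow_mult_distr, pow_inv, HCD; field;
          split; apply pow_nonzero; lra).
    apply Rmult_le_compat_l; auto. }
  assert (Hchord_A : Mb * A ^ (t + k) <= Mb * ((1 - s) * A ^ k + s * A ^ (D + k))).
  { apply Rmult_le_compat_l; auto. rewrite !pow_add.
    assert (Hr := pow_below_chord A t D ltac:(lra) Ht HD).
    assert (0 < A ^ k) by (apply pow_lt; lra). fold s in Hr. nra. }
  lra.
Qed.

End Perf.

Lemma is_series_Qrow n a abar c B Mb P1 e D i : (i < n)%nat ->
  col_stochastic n P1 -> (forall l, (l < n)%nat -> 0 <= e l <= 1) ->
  0 <= abar ^ 2 <= a ^ 2 -> 0 < c ^ 2 <= a ^ 2 -> 1 <= a ^ 2 ->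
  neumann_cv n (P1E n P1 e) (a ^ 2) ->
  is_series (fun k => first_success n P1 e k i * perf_bound (abar ^ 2) (c ^ 2) (a ^ 2) B Mb D k)
    (Qrow n a abar c B Mb P1 e D i).
Proof.
  intros Hi HP1 He Hb HC HA Hcv.
  assert (Z : forall x, 0 <= x <= a ^ 2 ->
            is_series (fun k => x ^ (D + k) * first_success n P1 e k i) (Zrow n P1 e D x i)).
  { intros x Hx. apply is_series_Zrow; auto.
    apply (neumann_cv_mono n _ (P1E_nonneg n P1 e HP1 He) x (a ^ 2)); auto. }
  assert (HCD : 0 < (c ^ 2) ^ D) by (apply pow_lt; lra).
  unfold Qrow. rewrite pow_mult.
  replace ((Zrow n P1 e D (abar ^ 2) i - Zrow n P1 e D (c ^ 2) i) * B / (c ^ 2) ^ D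
           + Mb * (Zrow n P1 e D (a ^ 2) i - Zrow n P1 e D 1 i))
    with ((B / (c ^ 2) ^ D * Zrow n P1 e D (abar ^ 2) i - B / (c ^ 2) ^ D * Zrow n P1 e D (c ^ 2) i)
          + (Mb * Zrow n P1 e D (a ^ 2) i - Mb * Zrow n P1 e D 1 i)) by (field; lra).
  eapply is_series_Rext;
    [|apply is_series_Rplus; apply is_series_Rminus; apply is_series_Rmult_l, Z; lra].
  intros k. unfold perf_bound. rewrite pow1, (pow_add (c ^ 2)). field. lra.
Qed.

Section PerformanceSeries.

Variables (n : nat) (P1 : mat) (e : nat -> R) (b C A B Mb : R).
Hypotheses (Hb : 0 < b) (HbC : b <= C) (HC1 : C <= 1) (HA : 1 <= A) (HB : 0 <= B) (HMb : 0 <= Mb).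
Hypotheses (HP1 : col_stochastic n P1) (He : forall i, (i < n)%nat -> 0 <= e i <= 1).
Hypothesis Hcv : neumann_cv n (P1E n P1 e) A.

(* [perf_from i t y]: expected [H] at the next reception when transmissions start [t] steps
   ahead in channel state [i] and [y] stands for [x^2] at the last reception. *)
Definition perf_from i t y :=
  Series (fun k => first_success n P1 e k i * perf b C A B Mb (t + k) y).

Lemma ex_series_first_success_growth i (f : nat -> R) K : (i < n)%nat ->
  (forall k, Rabs (f k) <= K * A ^ k) -> ex_series (fun k => first_success n P1 e k i * f k).
Proof.
  intros Hi Hf. apply (ex_series_Rabs_le _ (fun k => K * (A ^ (0 + k) * first_success n P1 e k i))).
  - intros k. assert (Hs := first_success_nonneg n P1 e k i HP1 He Hi).
    rewrite Rabs_mult, (Rabs_pos_eq _ Hs). simpl Nat.add.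
    specialize (Hf k). nra.
  - apply ex_series_Rmult_l. exists (Zrow n P1 e 0 A i). apply is_series_Zrow; auto.
Qed.

Lemma ex_series_perf i t y : (i < n)%nat -> 0 <= y ->
  ex_series (fun k => first_success n P1 e k i * perf b C A B Mb (t + k) y).
Proof.
  intros Hi Hy. apply (ex_series_first_success_growth i _ ((2 * y + 2 * Mb + B) * A ^ t)); auto.
  intros k. rewrite Rmult_assoc, <- pow_add. apply Rabs_perf_le; auto; lra.
Qed.

Lemma perf_from_0 i y M : (i < n)%nat -> 0 <= y ->
  (forall j, (j < n)%nat -> perf_from j 1 y <= M) -> perf_from i 0 y <= e i * M.
Proof.
  intros Hi Hy HM. unfold perf_from.
  rewrite Series_incr_1 by (apply ex_series_perf; auto).
  rewrite (Series_ext _ (fun k => e i * fsum n (fun j =>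
             P1 j i * (first_success n P1 e k j * perf b C A B Mb (1 + k) y)))).
  - rewrite Series_scal_l, Series_fsum
      by (intros; apply ex_series_Rmult_l, ex_series_perf; auto).
    rewrite (fsum_ext n _ (fun j => P1 j i * perf_from j 1 y))
      by (intros; apply Series_scal_l).
    rewrite first_success_0 by auto. simpl Nat.add.
    destruct HP1 as [HP0 HPsum].
    assert (fsum n (fun j => P1 j i * perf_from j 1 y) <= M).
    { rewrite <- (Rmult_1_l M), <- (HPsum i Hi), <- fsum_mult_r.
      apply fsum_le. intros j Hj. apply Rmult_le_compat_l; auto. }
    assert ((1 - e i) * perf b C A B Mb 0 y <= 0).
    { assert (Hei := He i Hi). assert (H0 := perf_0 b C A B Mb y). nra. }
    assert (Hei := He i Hi). nra.
  - intros k. rewrite first_success_S, Rmult_assoc, <- fsum_mult_r by auto.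
    f_equal. apply fsum_ext. intros; simpl Nat.add; ring.
Qed.

Lemma perf_from_convex i t D y : (i < n)%nat -> 0 <= y -> (t <= D)%nat -> (0 < D)%nat ->
  perf_from i t y <=
  (1 - INR t / INR D) * perf_from i 0 (C ^ t * y) + (INR t / INR D) * perf_from i D (y / C ^ (D - t)).
Proof.
  intros Hi Hy Ht HD. unfold perf_from.
  assert (Hy1 : 0 <= C ^ t * y) by (apply Rmult_le_pos; [apply pow_le|]; lra).
  assert (Hy2 : 0 <= y / C ^ (D - t)) by (apply Rdiv_le_0_compat; [|apply pow_lt]; lra).
  rewrite <- !Series_scal_l, <- Series_plus by (apply ex_series_Rmult_l, ex_series_perf; auto).
  apply Series_le_pointwise.
  - apply ex_series_perf; auto.
  - apply (ex_series_plus (fun k => _ * _) (fun k => _ * _));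
      apply ex_series_Rmult_l, ex_series_perf; auto.
  - intros k. simpl Nat.add.
    assert (Hs := first_success_nonneg n P1 e k i HP1 He Hi).
    assert (Hc := perf_convex b C A B Mb Hb ltac:(lra) ltac:(lra) HMb t D k y Hy Ht HD).
    eapply Rle_trans; [apply Rmult_le_compat_l; [exact Hs|exact Hc]|]. right; ring.
Qed.

Lemma perf_from_le_Qrow i D y Q : (i < n)%nat -> 0 <= y ->
  is_series (fun k => first_success n P1 e k i * perf_bound b C A B Mb D k) Q ->
  perf_from i D y <= Q.
Proof.
  intros Hi Hy HQ. rewrite <- (is_series_unique _ _ HQ). apply Series_le_pointwise.
  - apply ex_series_perf; auto.
  - exists Q; auto.
  - intros k. apply Rmult_le_compat_l; [apply first_success_nonneg; auto|].
    apply perf_le_bound; auto; lra.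
Qed.

Lemma perf_from_1_bounded : exists U, forall i y, (i < n)%nat -> 0 <= y -> perf_from i 1 y <= U.
Proof.
  destruct (fin_upper_bound n (fun i => Mb * Zrow n P1 e 1 A i)) as [U HU].
  exists U. intros i y Hi Hy. apply Rle_trans with (Mb * Zrow n P1 e 1 A i); [|apply HU; auto].
  assert (HZ := is_series_Zrow n P1 e 1 A i Hi Hcv).
  rewrite <- (is_series_unique _ _ HZ), <- Series_scal_l. unfold perf_from.
  apply Series_le_pointwise.
  - apply ex_series_perf; auto.
  - apply ex_series_Rmult_l. eexists; eauto.
  - intros k. assert (Hs := first_success_nonneg n P1 e k i HP1 He Hi).
    assert (Hk := perf_le_growth b C A B Mb Hb HbC HMb (1 + k) y Hy). nra.
Qed.


Lemma perf_from_1_chord D q S : (0 < D)%nat -> 0 <= S ->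
  (forall i y, (i < n)%nat -> 0 <= y -> perf_from i D y <= q) ->
  (forall i y, (i < n)%nat -> 0 <= y -> perf_from i 1 y <= S) ->
  forall i y, (i < n)%nat -> 0 <= y -> perf_from i 1 y <= (1 - 1 / INR D) * S + q / INR D.
Proof.
  intros HD HS HQ H1 i y Hi Hy.
  assert (HDR : 1 <= INR D) by (apply (le_INR 1); lia).
  assert (Hy1 : 0 <= C ^ 1 * y) by (apply Rmult_le_pos; [apply pow_le|]; lra).
  assert (Hy2 : 0 <= y / C ^ (D - 1)) by (apply Rdiv_le_0_compat; [|apply pow_lt]; lra).
  assert (Hc := perf_from_convex i 1 D y Hi Hy ltac:(lia) HD). simpl INR in Hc.
  assert (H0 := perf_from_0 i (C ^ 1 * y) S Hi Hy1 (fun j Hj => H1 j _ Hj Hy1)).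
  assert (HDq := HQ i _ Hi Hy2). assert (Hei := He i Hi).
  assert (Hs : 0 <= 1 / INR D <= 1).
  { split; [apply Rdiv_le_0_compat; lra|].
    apply (Rmult_le_reg_r (INR D)); [lra|]. field_simplify; lra. }
  assert (e i * S <= S) by nra.
  unfold Rdiv in *. nra.
Qed.

(* A sup argument: by the chord bound at [t = 1], [sup perf_from _ 1 _] cannot be
   nonnegative, and then the first-step recursion makes [perf_from _ 0 _] nonpositive. *)
Lemma perf_from_0_nonpos D q : (0 < D)%nat -> q < 0 ->
  (forall i y, (i < n)%nat -> 0 <= y -> perf_from i D y <= q) ->
  forall i y, (i < n)%nat -> 0 <= y -> perf_from i 0 y <= 0.
Proof.
  intros HD Hq HQ i0 y0 Hi0 Hy0.
  assert (HDR : 0 < INR D) by (apply lt_0_INR; auto).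
  destruct perf_from_1_bounded as [U HU].
  destruct (completeness (fun z => exists i y, (i < n)%nat /\ 0 <= y /\ z = perf_from i 1 y))
    as [S [Hub Hlub]].
  { exists U. intros z (i & y & Hi & Hy & ->). auto. }
  { exists (perf_from i0 1 y0), i0, y0. auto. }
  assert (H1 : forall i y, (i < n)%nat -> 0 <= y -> perf_from i 1 y <= S)
    by (intros i y Hi Hy; apply Hub; exists i, y; auto).
  assert (HS : S <= 0).
  { apply Rnot_lt_le. intros HS.
    assert (Hfix : S <= (1 - 1 / INR D) * S + q / INR D).
    { apply Hlub. intros z (i & y & Hi & Hy & ->). apply (perf_from_1_chord D); auto; lra. }
    assert (S <= q); [|lra].
    apply (Rmult_le_reg_l (/ INR D)); [apply Rinv_0_lt_compat; lra|].
    unfold Rdiv in Hfix. lra. }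
  assert (Hei := He i0 Hi0).
  assert (H0 := perf_from_0 i0 y0 S Hi0 Hy0 (fun j Hj => H1 j _ Hj Hy0)). nra.
Qed.

Lemma perf_from_neg D q : (0 < D)%nat -> q < 0 ->
  (forall i y, (i < n)%nat -> 0 <= y -> perf_from i D y <= q) ->
  forall i y t, (i < n)%nat -> 0 <= y -> (1 <= t <= D)%nat -> perf_from i t y <= q / INR D.
Proof.
  intros HD Hq HQ i y t Hi Hy Ht.
  assert (HDR : 0 < INR D) by (apply lt_0_INR; auto).
  assert (Ht1 : 1 <= INR t) by (apply (le_INR 1); lia).
  assert (HtD : INR t <= INR D) by (apply le_INR; lia).
  assert (Hy1 : 0 <= C ^ t * y) by (apply Rmult_le_pos; [apply pow_le|]; lra).
  assert (Hy2 : 0 <= y / C ^ (D - t)) by (apply Rdiv_le_0_compat; [|apply pow_lt]; lra).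
  assert (Hc := perf_from_convex i t D y Hi Hy ltac:(lia) HD).
  assert (H0 := perf_from_0_nonpos D q HD Hq HQ i _ Hi Hy1).
  assert (HDq := HQ i _ Hi Hy2).
  set (s := INR t / INR D) in *.
  assert (Hs : 0 <= s <= 1).
  { unfold s. split; [apply Rdiv_le_0_compat; lra|].
    apply (Rmult_le_reg_r (INR D)); auto. field_simplify; lra. }
  assert (E : q / INR D - s * q = (1 - INR t) * q / INR D) by (unfold s; field; lra).
  assert (0 <= (1 - INR t) * q / INR D) by (apply Rdiv_le_0_compat; nra).
  nra.
Qed.

Lemma is_series_perf_weighted (V : mat) t y g : 0 <= y ->
  is_series (fun k => perf b C A B Mb (t + k) y *
                      fsum n (fun i => (1 - e i) * mmul n (mpow n (P1E n P1 e) k) V i g))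
    (fsum n (fun l => V l g * perf_from l t y)).
Proof.
  intros Hy.
  apply (is_series_Rext (fun k => fsum n (fun l =>
           V l g * (first_success n P1 e k l * perf b C A B Mb (t + k) y)))).
  - intros k. unfold first_success, mmul.
    rewrite Rmult_comm, <- fsum_mult_r.
    rewrite (fsum_ext n (fun i => _ * _ * _)
               (fun i => fsum n (fun l => V l g * ((1 - e i) * mpow n (P1E n P1 e) k i l *
                                                     perf b C A B Mb (t + k) y))))
      by (intros; rewrite <- fsum_mult_l, <- fsum_mult_r; apply fsum_ext; intros; ring).
    rewrite fsum_comm. apply fsum_ext. intros l Hl.
    rewrite <- fsum_mult_r, <- fsum_mult_l. apply fsum_ext. intros; ring.
  - apply is_series_fsum. intros l Hl.
    apply is_series_Rmult_l, Series_correct, ex_series_perf; auto.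
Qed.

Lemma weighted_perf_negative (V : mat) D q t y g : (0 < D)%nat -> q < 0 ->
  (forall i, (i < n)%nat -> exists Q, Q <= q /\
     is_series (fun k => first_success n P1 e k i * perf_bound b C A B Mb D k) Q) ->
  col_stochastic n V -> (1 <= t <= D)%nat -> 0 <= y -> (g < n)%nat ->
  exists J, is_series (fun k => perf b C A B Mb (t + k) y *
                        fsum n (fun i => (1 - e i) * mmul n (mpow n (P1E n P1 e) k) V i g)) J
    /\ J < 0.
Proof.
  intros HD Hq HQ [HV0 HV1] Ht Hy Hg.
  assert (HDq : forall i y, (i < n)%nat -> 0 <= y -> perf_from i D y <= q).
  { intros i y' Hi Hy'. destruct (HQ i Hi) as [Q [HQq HQs]].
    eapply Rle_trans; [apply (perf_from_le_Qrow i D y' Q)|]; auto. }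
  exists (fsum n (fun l => V l g * perf_from l t y)).
  split; [apply is_series_perf_weighted; auto|].
  apply Rle_lt_trans with (fsum n (fun l => V l g * (q / INR D))).
  - apply fsum_le. intros l Hl. apply Rmult_le_compat_l; [apply HV0; auto|].
    apply (perf_from_neg D q); auto.
  - rewrite fsum_mult_r, HV1, Rmult_1_l by auto.
    apply Rdiv_neg_pos; [lra|apply lt_0_INR; auto].
Qed.

End PerformanceSeries.

Theorem mainTheorem5
  (a L c M B : R) (n : nat) (P0 P1 : mat) (e : nat -> R)
  (Ha : 1 < Rabs a)
  (Habar : 0 < (a + L) ^ 2 < 1)
  (Hc : (a + L) ^ 2 < c ^ 2 < 1)
  (HM : 0 < M) (HB : 0 < B)
  (HP0 : col_stochastic n P0) (HP1 : col_stochastic n P1)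
  (He : forall i, (i < n)%nat -> 0 <= e i <= 1)
  (Hrho : a ^ 2 * spectral_radius n (P1E n P1 e) < 1)
  (HB0 : B >= (M / (a ^ 2 - 1)) * ln (a ^ 2) / ln (c ^ 2 / (a + L) ^ 2))
  (D : nat)
  (HQ : forall i, (i < n)%nat ->
          Qrow n a (a + L) c B (M / (a ^ 2 - 1)) P1 e D i < 0) :
  forall (theta : nat), (1 <= theta <= D)%nat ->
  forall (x : R) (gamma : nat), (gamma < n)%nat ->
  exists J : R,
    infinite_sum
      (fun k => J_term n a (a + L) c B (M / (a ^ 2 - 1)) P0 P1 e theta (x ^ 2) gamma
                  (theta + k)%nat) J
    /\ J < 0.
Proof.
  intros theta Htheta x gamma Hgamma.
  assert (HA : 1 < a ^ 2) by (rewrite <- (pow2_abs a); assert (0 <= Rabs a) by apply Rabs_pos; nra).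
  assert (HMb : 0 < M / (a ^ 2 - 1)) by (apply Rdiv_lt_0_compat; lra).
  assert (Hcv : neumann_cv n (P1E n P1 e) (a ^ 2))
    by (apply neumann_cv_of_spectral_radius; [apply P1E_nonneg| |]; auto; lra).
  destruct (fin_neg_upper_bound n _ HQ) as [q [Hq HQq]].
  destruct (weighted_perf_negative n P1 e ((a + L) ^ 2) (c ^ 2) (a ^ 2) B (M / (a ^ 2 - 1))
              ltac:(lra) ltac:(lra) ltac:(lra) ltac:(lra) ltac:(lra) ltac:(lra) HP1 He Hcv
              (mmul n (mpow n P0 (theta - 1)) P1) D q theta (x ^ 2) gamma)
    as [J [HJ HJneg]]; auto.
  - lia.
  - intros i Hi. exists (Qrow n a (a + L) c B (M / (a ^ 2 - 1)) P1 e D i).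
    split; [apply HQq; auto|apply is_series_Qrow; auto; lra].
  - apply col_stochastic_mmul; [apply col_stochastic_mpow|]; auto.
  - apply pow2_ge_0.
  - exists J. split; auto. apply is_series_Reals.
    eapply is_series_Rext; [|exact HJ]. intros k.
    unfold J_term. rewrite Hfun_perf. replace (theta + k - theta)%nat with k by lia. reflexivity.
Qed.
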